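(* Let $Z$ be a smooth $l$-dimensional toric variety whose fan contains two $l$-dimensional cones $\sigma_+=\mathrm{cone}(v_1,\dots,v_{l-1},v_+)$ and $\sigma_-=\mathrm{cone}(v_1,\dots,v_{l-1},v_-)$ (with $v_1,\dots,v_{l-1},v_\pm$ primitive) such that $\sigma_+\cap\sigma_-$ has dimension $l-1$ and $\sigma_+\cup\sigma_-$ is strictly convex. Assume moreover that the piecewise linear function $k$ associated to the anticanonical bundle of $Z$ is not strictly convex on $\sigma_+\cup\sigma_-$, i.e. $k_{\sigma_+}(v_-)\ge 1$, where $k_{\sigma_+}$ is the linear function coinciding with $k$ on $\sigma_+$. Then the anticanonical bundle of any toric variety obtained from $Z$ by a sequence of blow-ups centred in torus-fixed points is not ample.
   Context: Toric varieties are for a torus $S$ with cocharacter lattice $\chi_*(S)$; the fan lives in $\chi_*(S)_{\mathbb{R}}$. The piecewise linear function $k$ associated to the anticanonical bundle is the function on the support of the fan, linear on each cone, with $k(v)=1$ for every primitive ray generator $v$; the anticanonical bundle is ample iff for each maximal cone $C$ and each primitive ray generator $v\notin C$ one has $k_C(v)<1$. A blow-up at a torus-fixed point corresponds to star subdivision of a maximal cone at the sum of its generators. *)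

(* Smooth fans in the lattice Z^l (cocharacter lattice),
   cones are described by their (primitive) ray generators. *)
From HB Require Import structures.
From mathcomp Require Import all_boot all_order all_algebra.
Set Implicit Arguments. Unset Strict Implicit. Unset Printing Implicit Defensive.
Import Order.TTheory GRing.Theory Num.Theory.
Local Open Scope ring_scope.

Notation lvec l := 'rV[int]_l.

Definition toQ l (v : lvec l) : 'rV[rat]_l := map_mx (fun z : int => z%:~R) v.

Definition cone_of l (S : seq (lvec l)) (x : 'rV[rat]_l) : Prop :=
  exists a : lvec l -> rat, (forall v, 0 <= a v) /\
    x = \sum_(v <- S) a v *: toQ v.

Definition smooth_cone l (S : seq (lvec l)) : Prop :=
  uniq S /\ exists B : 'M[int]_l, B \in unitmx /\
    forall v, v \in S -> exists i, row i B = v.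

(* A smooth fan: a finite list of smooth cones (the fan consists of these
   cones and their faces) such that any two of them meet in a common face. *)
Definition smooth_fan l (F : seq (seq (lvec l))) : Prop :=
  (forall S, S \in F -> smooth_cone S) /\
  (forall S T, S \in F -> T \in F -> forall x,
      (cone_of S x /\ cone_of T x) <-> cone_of [seq v <- S | v \in T] x).

Definition in_fan l (F : seq (seq (lvec l))) (C : seq (lvec l)) : bool :=
  has (perm_eq C) F.

Definition rays l (F : seq (seq (lvec l))) : seq (lvec l) := undup (flatten F).

Definition maximal_cone l (F : seq (seq (lvec l))) (C : seq (lvec l)) : bool :=
  (C \in F) && ~~ has (fun T => all (mem T) C && ~~ all (mem C) T) F.

Definition lin l (m : 'rV[rat]_l) (v : lvec l) : rat :=
  \sum_(i < l) m 0 i * (v 0 i)%:~R.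

(* ampleness of the anticanonical bundle: for every maximal cone C the
   linear function k_C (agreeing with k on C, i.e. equal to 1 on the
   generators of C) satisfies k_C(v) < 1 for every ray generator v not in C *)
Definition anticanonical_ample l (F : seq (seq (lvec l))) : Prop :=
  forall C, maximal_cone F C ->
    exists m : 'rV[rat]_l, (forall v, v \in C -> lin m v = 1) /\
      (forall v, v \in rays F -> v \notin C -> lin m v < 1).

(* blow-up in the torus-fixed point of the l-dimensional cone C :
   star subdivision of C at the sum u of its generators *)
Definition star_sub l (F : seq (seq (lvec l))) (C : seq (lvec l)) :=
  let u := \sum_(w <- C) w in
  [seq T <- F | ~~ perm_eq T C] ++ [seq u :: rem w C | w <- C].

Inductive blowups l (F : seq (seq (lvec l))) : seq (seq (lvec l)) -> Prop :=
| blowups_refl : blowups F F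
| blowups_step G C : blowups F G -> in_fan G C -> size C = l ->
    blowups F (star_sub G C).

From mathcomp Require Import all_boot all_order all_algebra ring lra.
Set Implicit Arguments. Unset Strict Implicit. Unset Printing Implicit Defensive.
Import Order.TTheory GRing.Theory Num.Theory.
Local Open Scope ring_scope.

(* A blow-up at a fixed point never subdivides the facet [cone vs]: after any
   sequence of blow-ups the fan still contains cones [vs, a] and [vs, b] with
   a = v_+ + ka (sum vs) and b = v_- + kb (sum vs).  Suppose the result were
   Fano and let m be the linear form of [vs, a], so m = 1 on vs and on a, and
   m b < 1.  Then m v_+ <= 1, and correcting m by a multiple of the form dual
   to v_+ gives a form equal to 1 on sigma_+; as v_- lies on the other side of
   the common facet, the hypothesis k_{sigma_+}(v_-) >= 1 yields m v_- >= 1,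
   hence m b >= 1. *)

Lemma mem_rcons_last (T : eqType) (s : seq T) x : x \in rcons s x.
Proof. by rewrite mem_rcons mem_head. Qed.

Section LinearForms.
Variable l : nat.
Implicit Types (v w : lvec l) (x y m : 'rV[rat]_l).

Definition linQ m x : rat := \sum_(i < l) m 0 i * x 0 i.

Lemma linE m v : lin m v = linQ m (toQ v).
Proof. by apply: eq_bigr => i _; rewrite mxE. Qed.

Lemma linQD m x y : linQ m (x + y) = linQ m x + linQ m y.
Proof. by rewrite /linQ -big_split; apply: eq_bigr => i _; rewrite mxE mulrDr. Qed.

Lemma linQZ m c x : linQ m (c *: x) = c * linQ m x.
Proof. rewrite /linQ mulr_sumr; apply: eq_bigr => i _; rewrite mxE; ring. Qed.

Lemma linQ0 m : linQ m 0 = 0.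
Proof. by rewrite /linQ big1 // => i _; rewrite mxE mulr0. Qed.

Lemma linQ_sum (T : Type) m (s : seq T) (f : T -> 'rV[rat]_l) :
  linQ m (\sum_(t <- s) f t) = \sum_(t <- s) linQ m (f t).
Proof.
elim: s => [|t s IH]; first by rewrite !big_nil linQ0.
by rewrite !big_cons linQD IH.
Qed.

Lemma toQD v w : toQ (v + w) = toQ v + toQ w.
Proof. by apply/matrixP => i j; rewrite !mxE intrD. Qed.

Lemma toQZ (c : int) v : toQ (c *: v) = c%:~R *: toQ v.
Proof. by apply/matrixP => i j; rewrite !mxE intrM. Qed.

Lemma toQ_sum (T : Type) (s : seq T) (f : T -> lvec l) :
  toQ (\sum_(t <- s) f t) = \sum_(t <- s) toQ (f t).
Proof.
elim: s => [|t s IH]; last by rewrite !big_cons toQD IH.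
by rewrite !big_nil; apply/matrixP => i j; rewrite !mxE.
Qed.

Lemma linD m v w : lin m (v + w) = lin m v + lin m w.
Proof. by rewrite !linE toQD linQD. Qed.

Lemma linZ m (c : int) v : lin m (c *: v) = c%:~R * lin m v.
Proof. by rewrite !linE toQZ linQZ. Qed.

Lemma lin_sum (T : Type) m (s : seq T) (f : T -> lvec l) :
  lin m (\sum_(t <- s) f t) = \sum_(t <- s) lin m (f t).
Proof. by rewrite linE toQ_sum linQ_sum; apply: eq_bigr => t _; rewrite linE. Qed.

Lemma linMn m v k : lin m (v *+ k) = lin m v *+ k.
Proof.
elim: k => [|k IH]; last by rewrite !mulrS linD IH.
by rewrite /lin big1 // => i _; rewrite mxE mulr0.
Qed.

Lemma lin_sum_const m c (s : seq (lvec l)) : {in s, forall v, lin m v = c} ->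
  lin m (\sum_(v <- s) v) = c *+ size s.
Proof.
move=> Hs; rewrite lin_sum big_seq (eq_bigr (fun=> c)) -?big_seq; last first.
  by move=> v /Hs.
by rewrite big_const_seq count_predT iter_addr_0.
Qed.

Lemma linDl m1 m2 v : lin (m1 + m2) v = lin m1 v + lin m2 v.
Proof. by rewrite /lin -big_split; apply: eq_bigr => i _; rewrite mxE mulrDl. Qed.

Lemma linBl m1 m2 v : lin (m1 - m2) v = lin m1 v - lin m2 v.
Proof. by rewrite /lin -sumrB; apply: eq_bigr => i _; rewrite !mxE mulrBl. Qed.

Lemma linZl c m v : lin (c *: m) v = c * lin m v.
Proof. rewrite /lin mulr_sumr; apply: eq_bigr => i _; rewrite mxE; ring. Qed.

End LinearForms.

Section SmoothCones.
Variable l : nat.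
Implicit Types (v w : lvec l) (S C : seq (lvec l)) (m n : 'rV[rat]_l).

Definition dual_form S w n :=
  lin n w = 1 /\ forall w', w' \in S -> w' != w -> lin n w' = 0.

Definition has_dual_basis S := forall w, w \in S -> exists n, dual_form S w n.

Lemma has_dual_basis_perm S C : perm_eq S C -> has_dual_basis S -> has_dual_basis C.
Proof.
move=> pSC dS w; rewrite -(perm_mem pSC) => /dS [n [n1 n0]].
by exists n; split => // w'; rewrite -(perm_mem pSC); apply: n0.
Qed.

Lemma dual_form_sum C w n : uniq C -> w \in C -> dual_form C w n ->
  lin n (\sum_(v <- C) v) = 1.
Proof.
move=> uC wC [n1 n0]; rewrite lin_sum (bigD1_seq w) //= n1.
by rewrite big_seq_cond big1 ?addr0 // => v /andP [vC vw]; apply: n0.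
Qed.

Lemma smooth_cone_uniq S : smooth_cone S -> uniq S.
Proof. by case. Qed.

Lemma smooth_cone_size S : smooth_cone S -> (size S <= l)%N.
Proof.
move=> [uS [B [_ HB]]].
rewrite -[leqRHS](size_enum_ord l) -(size_map (fun i => row i B)).
by apply: uniq_leq_size => // v /HB [i <-]; apply: map_f; rewrite mem_enum.
Qed.

(* The forms dual to the rows of B are the columns of B^-1. *)
Lemma smooth_cone_dual S : smooth_cone S -> has_dual_basis S.
Proof.
move=> [uS [B [uB HB]]] w /HB [i <-].
pose n := \row_j ((invmx B) j i)%:~R : 'rV[rat]_l.
have linB k : lin n (row k B) = ((B *m invmx B) k i)%:~R.
  by rewrite mxE rmorph_sum; apply: eq_bigr => j _; rewrite !mxE rmorphM mulrC.
exists n; split; first by rewrite linB mulmxV // mxE eqxx.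
move=> w' /HB [k <-] ki; have /negPf kiF : k != i by apply: contraNneq ki => ->.
by rewrite linB mulmxV // mxE kiF.
Qed.

Lemma smooth_cone_rcons_dual vs v : smooth_cone (rcons vs v) ->
  exists n, lin n v = 1 /\ {in vs, forall u, lin n u = 0}.
Proof.
move=> sC; have := smooth_cone_uniq sC; rewrite rcons_uniq => /andP [vvs _].
have [n [n1 n0]] := smooth_cone_dual sC (mem_rcons_last vs v).
exists n; split => // u uvs; apply: n0; first by rewrite mem_rcons in_cons uvs orbT.
by apply: contraNneq vvs => <-.
Qed.

Lemma smooth_cone_span S : smooth_cone S -> size S = l ->
  forall y : lvec l, exists c : lvec l -> int, y = \sum_(v <- S) c v *: v.
Proof.
move=> [uS [B [uB HB]]] szS y.
have rowB_inj : injective (fun i => row i B).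
  move=> i j /(congr1 (mulmx^~ (invmx B))); rewrite -!row_mul mulmxV // !row1.
  move/matrixP/(_ 0 i); rewrite !mxE !eqxx /=.
  by case: (eqVneq i j) => // _ /eqP; rewrite oner_eq0.
have rowsB : perm_eq [seq row i B | i <- enum 'I_l] S.
  have sub : {subset S <= [seq row i B | i <- enum 'I_l]}.
    by move=> v /HB [i <-]; apply: map_f; rewrite mem_enum.
  have szrows : (size [seq row i B | i <- enum 'I_l] <= size S)%N.
    by rewrite size_map size_enum_ord szS.
  have [_ eqS] := uniq_min_size uS sub szrows.
  by apply: uniq_perm; rewrite ?map_inj_uniq // -enumT enum_uniq.
pose c := y *m invmx B.
exists (fun v => if [pick i | row i B == v] is Some i then c 0 i else 0).
rewrite -(perm_big _ rowsB) big_map big_enum /= -{1}(mulmxKV uB y) mulmx_sum_row.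
apply: eq_bigr => i _; case: pickP => [j /eqP /rowB_inj -> //|/(_ i)].
by rewrite eqxx.
Qed.

End SmoothCones.

Section StarSubdivision.
Variable l : nat.
Implicit Types (v w : lvec l) (C T : seq (lvec l)) (G : seq (seq (lvec l))).

Lemma star_cone_uniq C w : uniq C -> has_dual_basis C -> w \in C ->
  uniq ((\sum_(v <- C) v) :: rem w C).
Proof.
move=> uC dC wC; have [n nw] := dC w wC.
rewrite /= rem_uniq // andbT mem_rem_uniq //; apply/andP => -[uw uC'].
have := nw.2 _ uC' uw; rewrite (dual_form_sum uC wC nw) => /eqP.
by rewrite oner_eq0.
Qed.

(* The new ray u = sum C takes the dual form of w; every other generator w0
   gets the difference of the forms dual to w0 and w. *)
Lemma star_cone_dual C w : uniq C -> has_dual_basis C -> w \in C ->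
  has_dual_basis ((\sum_(v <- C) v) :: rem w C).
Proof.
move=> uC dC wC; have memr c : c \in rem w C = (c != w) && (c \in C).
  exact: mem_rem_uniq.
have [nw [nw1 nw0] ] := dC w wC.
have nwu := dual_form_sum uC wC (conj nw1 nw0).
move=> w0; rewrite in_cons => /orP [/eqP -> | ].
  exists nw; split => // w'; rewrite in_cons => /orP [/eqP -> | ].
    by rewrite eqxx.
  by rewrite memr => /andP [w'w w'C] _; apply: nw0.
rewrite memr => /andP [w0w w0C]; have [nc [nc1 nc0] ] := dC w0 w0C.
have ncu := dual_form_sum uC w0C (conj nc1 nc0).
exists (nc - nw); split; first by rewrite linBl nc1 nw0 // subr0.
move=> w'; rewrite in_cons => /orP [/eqP -> _ | ].
  by rewrite linBl ncu nwu subrr.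
by rewrite memr => /andP [w'w w'C] w'w0; rewrite linBl nc0 // nw0 // subrr.
Qed.

Definition regular_cones G :=
  forall T, T \in G -> [/\ uniq T, (size T <= l)%N & has_dual_basis T].

Lemma smooth_fan_regular G : smooth_fan G -> regular_cones G.
Proof.
move=> [HG _] T /HG sT.
by split; [exact: smooth_cone_uniq | exact: smooth_cone_size | exact: smooth_cone_dual].
Qed.

Lemma star_sub_regular G C : regular_cones G -> in_fan G C -> size C = l ->
  regular_cones (star_sub G C).
Proof.
move=> HG /hasP [T0 T0G pC] szC T; rewrite mem_cat => /orP [].
  by rewrite mem_filter => /andP [_ /HG].
case/mapP => w wC ->; have [uT0 _ dT0] := HG T0 T0G.
have uC : uniq C by rewrite (perm_uniq pC).
have dC : has_dual_basis C by apply: has_dual_basis_perm dT0; rewrite perm_sym.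
split; [exact: star_cone_uniq | | exact: star_cone_dual].
by rewrite /= size_rem // szC prednK // -szC; case: (C) wC.
Qed.

Lemma blowups_regular F G : smooth_fan F -> blowups F G -> regular_cones G.
Proof.
move=> sF; elim => [|G' C _ IH inC szC]; first exact: smooth_fan_regular.
exact: star_sub_regular.
Qed.

Lemma regular_full_maximal G T : regular_cones G -> T \in G -> size T = l ->
  maximal_cone G T.
Proof.
move=> HG TG szT; rewrite /maximal_cone TG /=; apply/hasPn => T' T'G.
apply/negP => /andP [/allP sub nsub]; have [uT _ _] := HG T TG.
have [_ szT' _] := HG T' T'G.
have [_ eqT] := uniq_min_size uT sub (leq_trans szT' (eq_leq (esym szT))).
by move/negP: nsub; apply; apply/allP => x xT; rewrite inE eqT.
Qed.

Lemma in_fan_rays G C : in_fan G C -> {subset C <= rays G}.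
Proof.
case/hasP => T TG pCT v vC; rewrite mem_undup; apply/flattenP.
by exists T; rewrite // -(perm_mem pCT).
Qed.

(* Blowing up [vs, a] replaces it by [vs, a + sum vs], among others; any other
   blow-up leaves it untouched. *)
Lemma blowups_facet_ray F G vs vx : blowups F G -> in_fan F (rcons vs vx) ->
  exists k, in_fan G (rcons vs (vx + (\sum_(v <- vs) v) *+ k)).
Proof.
move=> bG inF; elim: bG => [|G' C _ [k inG] inC szC]; first by exists 0%N; rewrite addr0.
have /hasP [T TG pT] := inG.
case pTC: (perm_eq T C); last first.
  by exists k; apply/hasP; exists T; rewrite // mem_cat mem_filter pTC TG.
set a := vx + _ in pT; have pC := perm_trans pT pTC.
have aC : a \in C by rewrite -(perm_mem pC) mem_rcons mem_head.
exists k.+1; apply/hasP; exists ((\sum_(v <- C) v) :: rem a C).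
  by rewrite mem_cat map_f ?orbT.
have -> : \sum_(v <- C) v = vx + (\sum_(v <- vs) v) *+ k.+1.
  by rewrite -(perm_big _ pC) big_rcons /= /a mulrS addrCA addrC.
rewrite perm_rcons perm_cons -(perm_cons a).
by rewrite perm_rcons in pC; apply: perm_trans pC (perm_to_rem aC).
Qed.

End StarSubdivision.

Section CommonFacet.
Variable l : nat.
Implicit Types (v w : lvec l) (S T vs : seq (lvec l)) (x : 'rV[rat]_l) (n : 'rV[rat]_l).

Lemma cone_of_perm S T x : perm_eq S T -> cone_of S x -> cone_of T x.
Proof. by move=> pST [a [a0 ->]]; exists a; rewrite (perm_big _ pST). Qed.

Lemma cone_of_lin0 S x n : {in S, forall v, lin n v = 0} -> cone_of S x ->
  linQ n x = 0.
Proof.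
move=> n0 [a [_ ->]]; rewrite linQ_sum big_seq big1 // => v vS.
by rewrite linQZ -linE n0 // mulr0.
Qed.

Lemma rcons_cones_meet vs vp vm (c : lvec l -> int) :
  vp \notin vs -> vm \notin vs -> 0 <= c vp ->
  vm = \sum_(v <- rcons vs vp) c v *: v ->
  let x := toQ vm + \sum_(v <- vs) `|(c v)%:~R : rat| *: toQ v in
  cone_of (rcons vs vp) x /\ cone_of (rcons vs vm) x.
Proof.
move=> vpvs vmvs cvp_ge0 vmE x.
have vmQ : toQ vm = \sum_(v <- rcons vs vp) (c v)%:~R *: toQ v.
  by rewrite {1}vmE toQ_sum; apply: eq_bigr => v _; rewrite toQZ.
split.
  exists (fun v => if v == vp then (c vp)%:~R else (c v)%:~R + `|(c v)%:~R|).
  split.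
    move=> v; case: ifP => _; first by rewrite ler0z.
    by rewrite addrC -lerBlDr sub0r ler_normr lexx orbT.
  rewrite big_rcons /= eqxx /x vmQ big_rcons /=.
  rewrite -addrA (addrC (_ *: toQ vp)) addrA -big_split /=.
  congr (_ + _); rewrite !big_seq; apply: eq_bigr => v vvs.
  case: eqP => [evp|_]; first by rewrite -evp vvs in vpvs.
  by rewrite scalerDl.
exists (fun v => if v == vm then 1 else `|(c v)%:~R|); split.
  by move=> v; case: ifP.
rewrite big_rcons /= eqxx scale1r addrC /x; congr (_ + _).
rewrite !big_seq; apply: eq_bigr => v vvs.
by case: eqP => // evm; rewrite -evm vvs in vmvs.
Qed.

(* If v_- were on the same side of cone vs as v_+, then writing v_- in the
   basis (vs, v_+) and adding enough of vs gives a point in the interiors of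
   both cones, contradicting that they meet along cone vs. *)
Lemma common_facet_opposite F vs vp vm n :
  smooth_fan F -> in_fan F (rcons vs vp) -> in_fan F (rcons vs vm) ->
  smooth_cone (rcons vs vp) -> smooth_cone (rcons vs vm) ->
  size (rcons vs vp) = l -> vp != vm ->
  {in vs, forall v, lin n v = 0} -> lin n vp = 1 -> lin n vm <= 0.
Proof.
move=> [_ fanP] /hasP [S SF pS] /hasP [T TF pT] smP smM szP vpvm n0 n1.
have := smooth_cone_uniq smP; rewrite rcons_uniq => /andP [vpvs _].
have := smooth_cone_uniq smM; rewrite rcons_uniq => /andP [vmvs _].
rewrite leNgt; apply/negP => nvm_gt0.
have [c vmE] := smooth_cone_span smP szP vm.
have cvp : (c vp)%:~R = lin n vm.
  rewrite vmE lin_sum big_rcons /= linZ n1 mulr1.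
  by rewrite big_seq big1 ?add0r // => v vvs; rewrite linZ n0 ?mulr0.
have cvp_ge0 : 0 <= c vp by rewrite -(ler0z rat) cvp ltW.
have [xP xM] := rcons_cones_meet vpvs vmvs cvp_ge0 vmE.
set x := toQ vm + _ in xP xM.
have x0 : linQ n x = 0.
  have [/(_ (conj (cone_of_perm pS xP) (cone_of_perm pT xM))) xST _] := fanP S T SF TF x.
  apply: cone_of_lin0 xST => v; rewrite mem_filter -(perm_mem pT) -(perm_mem pS).
  rewrite !mem_rcons !in_cons => /andP [vT vS].
  case/orP: vS => [/eqP evp | vvs]; last exact: n0.
  case/orP: vT => [/eqP evm | vvs]; last exact: n0.
  by move: vpvm; rewrite -evp evm eqxx.
move: x0; rewrite /x linQD linQ_sum big_seq big1 ?addr0 -?linE => [nvm0|v vvs].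
  by rewrite nvm0 ltxx in nvm_gt0.
by rewrite linQZ -linE n0 // mulr0.
Qed.

End CommonFacet.

Lemma lin_facet_ray l (m : 'rV[rat]_l) c (vs : seq (lvec l)) vx k :
  {in vs, forall v, lin m v = c} ->
  lin m (vx + (\sum_(v <- vs) v) *+ k) = lin m vx + c *+ size vs *+ k.
Proof. by move=> mc; rewrite linD linMn (lin_sum_const mc). Qed.

Lemma facet_ray_notin l (vs : seq (lvec l)) vp vm (np nm : 'rV[rat]_l) ka kb :
  {in vs, forall v, lin np v = 0} -> lin np vp = 1 -> lin np vm <= 0 ->
  {in vs, forall v, lin nm v = 0} -> lin nm vm = 1 ->
  vm + (\sum_(v <- vs) v) *+ kb \notin rcons vs (vp + (\sum_(v <- vs) v) *+ ka).
Proof.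
move=> np0 np1 np_vm nm0 nm1; rewrite mem_rcons in_cons negb_or; apply/andP; split.
  apply/eqP => /(congr1 (lin np)); rewrite !(lin_facet_ray _ _ np0) np1.
  by rewrite !mul0rn !addr0 => nvm1; rewrite nvm1 ler10 in np_vm.
apply/negP => /nm0; rewrite (lin_facet_ray _ _ nm0) nm1 !mul0rn addr0.
by move/eqP; rewrite oner_eq0.
Qed.

(* Correct m by a multiple of the form dual to v_+ so that it equals 1 on
   sigma_+; since v_- lies on the other side, this can only lower m v_-. *)
Lemma facet_kink_ge1 l (vs : seq (lvec l)) vp vm (n m : 'rV[rat]_l) :
  (forall m' : 'rV[rat]_l, (forall v, v \in rcons vs vp -> lin m' v = 1) ->
      1 <= lin m' vm) ->
  {in vs, forall v, lin n v = 0} -> lin n vp = 1 -> lin n vm <= 0 ->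
  {in vs, forall v, lin m v = 1} -> lin m vp <= 1 -> 1 <= lin m vm.
Proof.
move=> kink n0 n1 nvm m1 mvp.
have : 1 <= lin (m + (1 - lin m vp) *: n) vm.
  apply: kink => v; rewrite mem_rcons in_cons linDl linZl => /orP [/eqP -> | vvs].
    by rewrite n1 mulr1 addrC subrK.
  by rewrite m1 // n0 // mulr0 addr0.
rewrite linDl linZl; nra.
Qed.

Theorem lemma3p1 (l : nat) (F : seq (seq 'rV[int]_l))
  (vs : seq 'rV[int]_l) (vp vm : 'rV[int]_l) :
  smooth_fan F ->
  size vs = l.-1 ->
  in_fan F (rcons vs vp) ->
  in_fan F (rcons vs vm) ->
  smooth_cone (rcons vs vp) -> smooth_cone (rcons vs vm) ->
  (0 < l)%N ->
  vp != vm ->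
  (forall x y : 'rV[rat]_l,
      (cone_of (rcons vs vp) x \/ cone_of (rcons vs vm) x) ->
      (cone_of (rcons vs vp) y \/ cone_of (rcons vs vm) y) ->
      (cone_of (rcons vs vp) (x + y) \/ cone_of (rcons vs vm) (x + y))) ->
  (forall x : 'rV[rat]_l,
      (cone_of (rcons vs vp) x \/ cone_of (rcons vs vm) x) ->
      (cone_of (rcons vs vp) (- x) \/ cone_of (rcons vs vm) (- x)) ->
      x = 0) ->
  (forall m : 'rV[rat]_l, (forall v, v \in rcons vs vp -> lin m v = 1) ->
      1 <= lin m vm) ->
  forall G, blowups F G -> ~ anticanonical_ample G.
Proof.
move=> sF szvs inP inM smP smM l_gt0 vpvm _ _ kink G bG ample.
have szP : size (rcons vs vp) = l by rewrite size_rcons szvs prednK.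
have [np [np1 np0]] := smooth_cone_rcons_dual smP.
have [nm [nm1 nm0]] := smooth_cone_rcons_dual smM.
have np_vm := common_facet_opposite sF inP inM smP smM szP vpvm np0 np1.
have [ka /hasP [T TG pT]] := blowups_facet_ray bG inP.
have [kb inb] := blowups_facet_ray bG inM.
set a := vp + _ in pT; set b := vm + _ in inb.
have Tmax : maximal_cone G T.
  apply: regular_full_maximal (blowups_regular sF bG) TG _.
  by rewrite -(perm_size pT) size_rcons szvs prednK.
have [m [mT m_lt1]] := ample T Tmax.
have m1 : {in vs, forall v, lin m v = 1}.
  by move=> v vvs; apply: mT; rewrite -(perm_mem pT) mem_rcons in_cons vvs orbT.
have := mT a; rewrite -(perm_mem pT) mem_rcons_last (lin_facet_ray _ _ m1).
move=> /(_ isT) ma; have mvp : lin m vp <= 1.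
  by rewrite -ma lerDl mulrn_wge0 // mulrn_wge0.
have bT : b \notin T by rewrite -(perm_mem pT) (facet_ray_notin _ _ np0 np1 np_vm nm0 nm1).
have := m_lt1 b (in_fan_rays inb (mem_rcons_last vs b)) bT.
rewrite (lin_facet_ray _ _ m1) ltNge => /negP; apply.
by rewrite ler_wpDr ?mulrn_wge0 // (facet_kink_ge1 kink np0 np1).
Qed.
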